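(* Let $K^{(1)},K^{(2)}$ be independent fractal percolations on $I=[0,1]$ with the same parameters $M\in\mathbb{N}_{\geq2}$ and $p\in(0,1]$, with construction steps $K_n^{(i)}$, and let $D_n^{(i)}:=\overline{I\setminus K_n^{(i)}}$. Then for any $n\in\mathbb{N}_0$, $$\mathbb{E}V_1(D_n^{(1)}\cap D_n^{(2)})=1-2\mathbb{E}V_1(K_n^{(1)})+\mathbb{E}V_1(K_n^{(1)}\cap K_n^{(2)}),$$ $$\mathbb{E}V_0(D_n^{(1)}\cap D_n^{(2)})=2\mathbb{E}V_0(K_n^{(1)})-\mathbb{E}V_0(K_n^{(1)}\cap K_n^{(2)})+\mathbb{E}N(K_n^{(1)}\cap K_n^{(2)})+1-4p^n+2p^{2n}.$$ Moreover, $\mathbb{E}V_1(D_n^{(1)})=1-\mathbb{E}V_1(K_n^{(1)})$ and $\mathbb{E}V_0(D_n^{(1)})=\mathbb{E}V_0(K_n^{(1)})+1-2p^n$.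
   Context: Fractal percolation on $[0,1]$: $K_0=[0,1]$; given $K_{n-1}$, a union of closed grid intervals of length $M^{-(n-1)}$, each is divided into $M$ closed subintervals of length $M^{-n}$, each kept independently (of everything else) with probability $p$; $K_n$ is the union of kept subintervals. $\overline{A}$ denotes closure; $V_1$ is length, $V_0$ the number of connected components, and $N(A)$ the number of isolated points of $A$. *)

From HB Require Import structures.
From mathcomp Require Import all_boot all_order all_algebra.
From mathcomp Require Import finmap all_classical all_reals all_analysis.
Set Implicit Arguments. Unset Strict Implicit. Unset Printing Implicit Defensive.
Import Order.TTheory GRing.Theory Num.Theory.
Import numFieldNormedType.Exports.
Local Open Scope classical_set_scope.
Local Open Scope ring_scope.

(* Random keep-bits of fractal percolation up to step n:
   a bit for every grid interval of every level k+1 (k < n);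
   grid interval a of level k+1 is [a/M^(k+1), (a+1)/M^(k+1)], a < M^(k+1). *)
Definition cell (n M : nat) := {k : 'I_n & 'I_(M ^ k.+1)}.
Definition config (n M : nat) := {ffun cell n M -> bool}.

(* the interval j of level n (j < M^n) is kept in K_n iff all its ancestors
   (at levels 1..n, including itself) have bit true *)
Definition kept (n M : nat) (b : config n M) (j : nat) : bool :=
  [forall x : cell n M,
     (val (tagged x) == j %/ M ^ (n - (tag x).+1))%N ==> b x].

Definition Kn {R : realType} (n M : nat) (b : config n M) : set R :=
  [set x : R | exists j : nat, [/\ (j < M ^ n)%N, kept b j,
      j%:R / (M ^ n)%:R <= x & x <= j.+1%:R / (M ^ n)%:R]].

Definition Dn {R : realType} (n M : nat) (b : config n M) : set R :=
  closure (`[0, 1]%classic `\` Kn b).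

Definition prob {R : realType} (n M : nat) (p : R) (b : config n M) : R :=
  \prod_(x : cell n M) (if b x then p else 1 - p).

Definition Exp {R : realType} (n M : nat) (p : R) (X : config n M -> R) : R :=
  \sum_(b : config n M) prob p b * X b.

Definition Exp2 {R : realType} (n M : nat) (p : R)
    (X : config n M -> config n M -> R) : R :=
  \sum_(b1 : config n M) \sum_(b2 : config n M)
     prob p b1 * prob p b2 * X b1 b2.

Definition V1 {R : realType} (A : set R) : R := fine (lebesgue_measure A).

Definition components {R : realType} (A : set R) : set (set R) :=
  [set connected_component A x | x in A].

Definition V0 {R : realType} (A : set R) : nat := (#|` fset_set (components A)|)%fset.

Definition isolated_points {R : realType} (A : set R) : set R :=
  [set x | A x /\ exists U, nbhs x U /\ A `&` U = [set x]].

Definition Niso {R : realType} (A : set R) : nat :=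
  (#|` fset_set (isolated_points A)|)%fset.

(* With N = M^n, every set in the statement is a "grid set": finitely many grid
   points i/N together with finitely many open cells ]i/N, (i+1)/N[.  K_n is the
   union of its kept closed cells, D_n the union of the complementary closed
   cells, and grid sets are closed under intersection.  For a closed grid set,
   V1 is the number of cells divided by N, V0 the number of left endpoints of
   components, and the isolated points are the points touching no cell.  Hence
   each of the four identities already holds for every single configuration
   (or pair of configurations), with boundary terms coming from the cells 0 and
   N-1 at the two ends of [0,1]; it follows from a case analysis around each
   grid point and a telescoping sum.  Taking expectations, linearity and
   independence leave only P(cell j is kept) = p^n, as its n ancestors must
   all survive. *)

From mathcomp Require Import all_boot all_order all_algebra.
From mathcomp Require Import finmap all_classical all_reals all_analysis.
From mathcomp Require Import ring lra.
Set Implicit Arguments. Unset Strict Implicit. Unset Printing Implicit Defensive.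
Import Order.TTheory GRing.Theory Num.Theory.
Import numFieldNormedType.Exports.
Local Open Scope classical_set_scope.
Local Open Scope ring_scope.

Lemma card_fset_set_ltn (P : pred nat) (K : nat) :
  #|` fset_set [set i | (i < K)%N && P i]|%fset = (\sum_(i < K) P i)%N.
Proof.
have -> : [set i | (i < K)%N && P i] = [set` [fset i in [seq i <- iota 0 K | P i]]%fset].
  by apply/seteqP; split => i; rewrite /= !inE mem_filter mem_iota andbC.
rewrite set_fsetK card_fseq undup_id ?filter_uniq ?iota_uniq // size_filter.
rewrite -sumn_count sumnE big_map -(big_mkord xpredT (fun i => nat_of_bool (P i))).
by rewrite /index_iota subn0.
Qed.

Lemma card_fset_set_image (T U : choiceType) (f : T -> U) (A : set T) :
  finite_set A -> {in A &, injective f} ->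
  #|` fset_set (f @` A)|%fset = #|` fset_set A|%fset.
Proof.
move=> finA injf; rewrite fset_set_image //; apply/eqP/card_in_imfsetP.
by move=> x y; rewrite !in_fset_set // => xA yA; apply: injf.
Qed.

Lemma itvcc_limit_point_itvoo (R : realType) (a b : R) : a < b ->
  `[a, b]%classic `<=` limit_point `]a, b[%classic.
Proof.
move=> ab x; rewrite /= in_itv /= => /andP[ax xb] U /nbhs_ballP[e /= e0 xeU].
have below (f : R) : 0 < f -> exists d, [/\ 0 < d, d < e & d < f].
  by move=> f0; case: (ltP e f) => ?; [exists (e / 2)|exists (f / 2)]; split; lra.
have near_y (y : R) : `|x - y| < e -> y != x -> a < y < b ->
    exists y0, [/\ y0 != x, `]a, b[%classic y0 & U y0].
  move=> xy yx yab; exists y; split; rewrite // ?in_itv //.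
  by apply: xeU; rewrite -ball_normE.
case: (ltP x b) => [xb'|bx].
- have /below[d [d0 de db]] : 0 < b - x by lra.
  apply: (near_y (x + d)); first by rewrite opprD addNKr normrN gtr0_norm.
  + by rewrite gt_eqF // ltrDl.
  + by apply/andP; split; lra.
- have /below[d [d0 de db]] : 0 < b - a by lra.
  apply: (near_y (x - d)); first by rewrite opprB addrC subrK gtr0_norm.
  + by rewrite lt_eqF // ltrBlDr ltrDl.
  + by apply/andP; split; lra.
Qed.

Section GridSets.
Variables (R : realType) (N : nat).
Hypothesis N_gt0 : (0 < N)%N.

Definition grid (i : nat) : R := i%:R / N%:R.

Lemma ltr_grid i j : (grid i < grid j) = (i < j)%N.
Proof. by rewrite /grid ltr_pM2r ?ltr_nat // invr_gt0 ltr0n. Qed.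

Lemma ler_grid i j : (grid i <= grid j) = (i <= j)%N.
Proof. by rewrite /grid ler_pM2r ?ler_nat // invr_gt0 ltr0n. Qed.

Lemma grid_ltS i : grid i < grid i.+1.
Proof. by rewrite ltr_grid. Qed.

Lemma grid_inj : injective grid.
Proof. by move=> i j eij; apply/eqP; rewrite eqn_leq -!ler_grid eij lexx. Qed.

Lemma grid0 : grid 0 = 0.
Proof. by rewrite /grid mul0r. Qed.

Lemma gridN : grid N = 1.
Proof. by rewrite /grid divff // pnatr_eq0 -lt0n. Qed.

Lemma gridS i : grid i.+1 = grid i + N%:R^-1.
Proof. by rewrite /grid -natr1 mulrDl mul1r. Qed.

Lemma sum_invN : \sum_(i < N) (N%:R : R)^-1 = 1.
Proof. by rewrite sumr_const card_ord -[_ *+ N]mulr_natr mulVf // pnatr_eq0 -lt0n. Qed.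

Lemma grid_cell_uniq i j (x : R) :
  grid i < x < grid i.+1 -> grid j < x < grid j.+1 -> i = j.
Proof.
move=> /andP[ix xi] /andP[jx xj].
have := lt_trans ix xj; have := lt_trans jx xi; rewrite !ltr_grid !ltnS => ji ij.
by apply/eqP; rewrite eqn_leq ij ji.
Qed.

Lemma grid_notin_cell i j : ~~ (grid j < grid i < grid j.+1).
Proof. by rewrite !ltr_grid ltnS ltnNge andNb. Qed.

Definition gridset (pt cl : nat -> bool) : set R :=
  [set x | (exists i, [/\ (i <= N)%N, pt i & x = grid i]) \/
           (exists i, [/\ (i < N)%N, cl i & grid i < x < grid i.+1])].

Definition cellset (a : nat -> bool) : set R :=
  [set x | exists j, [/\ (j < N)%N, a j, grid j <= x & x <= grid j.+1]].

Definition ends (a : nat -> bool) (i : nat) : bool :=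
  ((0 < i)%N && a i.-1) || ((i < N)%N && a i).

Lemma gridset_grid (pt cl : nat -> bool) i : (i <= N)%N -> pt i -> gridset pt cl (grid i).
Proof. by move=> iN pi; left; exists i. Qed.

Lemma cellset_gridset a : cellset a = gridset (ends a) a.
Proof.
apply/seteqP; split => x.
- case=> j [jN aj]; rewrite le_eqVlt => /orP[/eqP <-|jx].
    by move=> _; apply: gridset_grid; rewrite 1?ltnW // /ends jN aj orbT.
  rewrite le_eqVlt => /orP[/eqP ->|xj]; first by apply: gridset_grid; rewrite // /ends /= aj.
  by right; exists j; rewrite jx xj.
- case=> [[i [iN /orP[/andP[i0 ai]|/andP[iN' ai]] ->]]|[i [iN ai /andP[ix xi]]]].
  + by exists i.-1; rewrite prednK // !ler_grid leq_pred.
  + by exists i; rewrite !ler_grid leqnSn.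
  + by exists i; rewrite (ltW ix) (ltW xi).
Qed.

Lemma gridsetI (pt cl pt' cl' : nat -> bool) :
  gridset pt cl `&` gridset pt' cl' =
  gridset (fun i => pt i && pt' i) (fun i => cl i && cl' i).
Proof.
apply/seteqP; split => x.
- case=> [[[i [iN pi ->]]|[i [iN ci xi]]] [[i' [iN' pi' e]]|[i' [iN' ci' xi']]]].
  + by move/grid_inj: e => ii'; subst i'; left; exists i; rewrite pi pi'.
  + by move: (grid_notin_cell i i'); rewrite xi'.
  + by move: (grid_notin_cell i' i); rewrite -e xi.
  + by move: (grid_cell_uniq xi xi') => ii'; subst i'; right; exists i; rewrite ci ci'.
- case=> [[i [iN /andP[p p'] ->]]|[i [iN /andP[c c'] xi]]].
  + by split; left; exists i.
  + by split; right; exists i.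
Qed.

Lemma closed_cellset a : closed (cellset a).
Proof.
have -> : cellset a = \bigcup_(j in [set j | (j < N)%N && a j]) `[grid j, grid j.+1]%classic.
  apply/seteqP; split => x.
    by case=> j [jN aj jx xj]; exists j; rewrite /= ?jN // in_itv /= jx.
  by case=> j /= /andP[jN aj]; rewrite in_itv /= => /andP[jx xj]; exists j.
apply: closed_bigcup => [|j _]; last exact: itv_closed.
by apply: sub_finite_set (finite_II N) => j /andP[].
Qed.

Lemma grid_cover (x : R) : 0 <= x <= 1 ->
  exists j, [/\ (j < N)%N, grid j <= x & x <= grid j.+1].
Proof.
move=> /andP[x0 x1].
have lb : exists j, (j < N)%N && (grid j <= x) by exists 0%N; rewrite N_gt0 grid0.
have ub j : (j < N)%N && (grid j <= x) -> (j <= N)%N by case/andP => /ltnW.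
have [j /andP[jN jx] jmax] := ex_maxnP lb ub; exists j; split => //.
have [jN'|Nj] := ltnP j.+1 N; last by apply: le_trans x1 _; rewrite -gridN ler_grid.
rewrite leNgt; apply/negP => /ltW xj.
by move: (jmax j.+1); rewrite jN' xj ltnn => /(_ isT).
Qed.

Lemma closure_cellsetC a :
  closure (`[0, 1]%classic `\` cellset a) = cellset (fun j => ~~ a j).
Proof.
apply/seteqP; split.
  apply: subset_trans (@closed_cellset (fun j => ~~ a j)); apply: closureS.
  move=> x []; rewrite /= in_itv /= => /grid_cover[j [jN jx xj]] notK.
  by exists j; split => //; apply/negP => aj; apply: notK; exists j.
move=> x [j [jN naj jx xj]].
have : limit_point `]grid j, grid j.+1[%classic x.
  by apply: itvcc_limit_point_itvoo (grid_ltS j) _ _; rewrite /= in_itv /= jx xj.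
move/subset_limit_point.
apply: closureS => z; rewrite /= in_itv /= => /andP[jz zj]; split.
  rewrite /= in_itv /= -grid0 -gridN.
  by rewrite (le_trans _ (ltW jz)) ?(le_trans (ltW zj)) ?ler_grid.
case=> k [kN ak kz zk].
have := le_lt_trans kz zj; have := lt_le_trans jz zk.
rewrite !ltr_grid !ltnS => jk kj.
have ejk : j = k by apply/eqP; rewrite eqn_leq jk kj.
by move: naj; rewrite ejk ak.
Qed.

Lemma V1_gridset (pt cl : nat -> bool) :
  V1 (gridset pt cl) = \sum_(i < N) (cl i)%:R / N%:R.
Proof.
pose cell i := if cl i then `]grid i, grid i.+1[%classic else set0.
pose pts := [set x | exists i, [/\ (i <= N)%N, pt i & x = grid i]].
have -> : gridset pt cl = (\big[setU/set0]_(i < N) cell i) `|` pts.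
  rewrite -bigcup_mkord; apply/seteqP; split => x.
  - case=> [xpt|[i [iN ci xi]]]; first by right.
    by left; exists i; rewrite /cell ?ci //= in_itv.
  - case=> [[i /= iN]|xpt]; last by left.
    by rewrite /cell; case: ifP => // ci; rewrite /= in_itv /= => xi; right; exists i.
have mcell i : measurable (cell i) by rewrite /cell; case: ifP.
have pts_countable : countable pts.
  apply/finite_set_countable/(sub_finite_set (B := grid @` `I_N.+1)).
    by move=> x [i [iN _ ->]]; exists i.
  exact/finite_image/finite_II.
have mpts : measurable pts.
  by apply: countable_measurable pts_countable => t; exact: measurable_set1.
have mcells : measurable (\big[setU/set0]_(i < N) cell i).
  by apply: bigsetU_measurable.
rewrite /V1 measureU0 //; last exact: countable_lebesgue_measure0.
rewrite measure_bigsetU //; last first.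
  move=> i j _ _ [x []]; rewrite /cell.
  by case: ifP => // _; case: ifP => // _; rewrite /= !in_itv /=; apply: grid_cell_uniq.
have cell_measure i : lebesgue_measure (cell i) = ((cl i)%:R / N%:R)%:E.
  rewrite /cell; case: (cl i); last by rewrite measure0 mul0r.
  rewrite lebesgue_measure_itv /= lte_fin grid_ltS -EFinD.
  by rewrite gridS addrAC subrr add0r mul1r.
by rewrite (eq_bigr _ (fun (i : 'I_N) _ => cell_measure i)) sumEFin.
Qed.

Definition grid_closed (pt cl : nat -> bool) :=
  forall i, (i < N)%N -> cl i -> pt i && pt i.+1.

Lemma grid_closed_ends a : grid_closed (ends a) a.
Proof. by move=> i iN ai; rewrite /ends iN ai orbT. Qed.

Lemma grid_closedI (pt cl pt' cl' : nat -> bool) :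
  grid_closed pt cl -> grid_closed pt' cl' ->
  grid_closed (fun i => pt i && pt' i) (fun i => cl i && cl' i).
Proof.
move=> h h' i iN /andP[ci ci'].
by case/andP: (h i iN ci) => -> ->; case/andP: (h' i iN ci') => -> ->.
Qed.

Definition comp_start (pt cl : nat -> bool) (i : nat) : bool :=
  pt i && ~~ ((0 < i)%N && cl i.-1).

Definition lone_point (pt cl : nat -> bool) (i : nat) : bool :=
  comp_start pt cl i && ~~ ((i < N)%N && cl i).

Definition nstarts (pt cl : nat -> bool) : nat :=
  (\sum_(i < N.+1) comp_start pt cl i)%N.

Definition nlone (pt cl : nat -> bool) : nat :=
  (\sum_(i < N.+1) lone_point pt cl i)%N.

Lemma isolated_points_gridset (pt cl : nat -> bool) :
  isolated_points (gridset pt cl) =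
  grid @` [set i | (i < N.+1)%N && lone_point pt cl i].
Proof.
apply/seteqP; split => x.
- case=> Ax [U [Ux AU]].
  have no_cell j : (j < N)%N -> cl j -> ~~ (grid j <= x <= grid j.+1).
    move=> jN cj; apply/negP => jx.
    have [y [yx /= jy Uy]] := itvcc_limit_point_itvoo (grid_ltS j) jx Ux.
    have : (gridset pt cl `&` U) y by split => //; right; exists j; move: jy; rewrite in_itv.
    by rewrite AU => /= eyx; rewrite eyx eqxx in yx.
  case: Ax => [[i [iN pi xi]]|[i [iN ci /andP[ix xi]]]]; last first.
    by move: (no_cell i iN ci); rewrite (ltW ix) (ltW xi).
  subst x; exists i => //; rewrite /= ltnS iN /lone_point /comp_start pi /=.
  apply/andP; split; apply/negP => /andP[i_gt0 ci].
    move: (no_cell i.-1); rewrite prednK // iN ci lexx ler_grid leq_pred.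
    by move=> /(_ isT isT).
  by move: (no_cell i i_gt0 ci); rewrite lexx ler_grid leqnSn.
- case=> i /andP[iN /andP[/andP[pi nl] nr]] <-; split; first exact: gridset_grid.
  have invN_gt0 : 0 < (N%:R : R)^-1 by rewrite invr_gt0 ltr0n.
  exists (ball (grid i) N%:R^-1); split; first exact: nbhsx_ballx.
  apply/seteqP; split => [y|y ->]; last by split; [apply: gridset_grid|apply: ballxx].
  case=> Ay; rewrite -ball_normE /= ltr_distlC => /andP[iy yi].
  have {}iy : grid i < y + N%:R^-1 by rewrite -ltrBlDr; exact: iy.
  have {}yi : y < grid i.+1 by rewrite gridS; exact: yi.
  case: Ay => [[j [jN pj yj]]|[j [jN cj /andP[jy yj]]]].
    subst y; move: iy yi; rewrite -gridS !ltr_grid !ltnS => ij ji.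
    by congr grid; apply/eqP; rewrite eqn_leq ij ji.
  have ji : (j <= i)%N by rewrite -ltnS -ltr_grid (lt_trans jy yi).
  have : (i <= j.+1)%N by rewrite -ltnS -ltr_grid gridS (lt_trans iy) // ltrD2r.
  rewrite leq_eqVlt => /orP[/eqP eij|ij].
    by move: nl; rewrite eij /= cj.
  have eji : j = i by apply/eqP; rewrite eqn_leq ji -ltnS ij.
  by move: nr; rewrite -eji jN cj.
Qed.

Lemma Niso_gridset (pt cl : nat -> bool) :
  Niso (gridset pt cl) = nlone pt cl.
Proof.
rewrite /Niso isolated_points_gridset card_fset_set_image ?card_fset_set_ltn //.
  by apply: sub_finite_set (finite_II N.+1) => i /andP[].
by move=> i j _ _; apply: grid_inj.
Qed.

Section ClosedGridSet.
Variables pt cl : nat -> bool.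
Hypothesis ptcl_closed : grid_closed pt cl.
Local Notation A := (gridset pt cl).

Lemma gridset_cell j x : (j < N)%N -> cl j -> grid j <= x <= grid j.+1 -> A x.
Proof.
move=> jN cj; have /andP[pj pj1] := ptcl_closed jN cj.
rewrite le_eqVlt => /andP[/orP[/eqP <-|jx]]; first by move=> _; apply: gridset_grid; rewrite 1?ltnW.
rewrite le_eqVlt => /orP[/eqP ->|xj]; first exact: gridset_grid.
by right; exists j; rewrite jx xj.
Qed.

Lemma connected_component_cell j x : (j < N)%N -> cl j ->
  grid j <= x <= grid j.+1 -> connected_component A (grid j) x.
Proof.
move=> jN cj jx; apply: (@connected_component_max _ _ `[grid j, grid j.+1]%classic).
- by rewrite /= in_itv /= lexx ltW ?grid_ltS.
- by move=> y; rewrite /= in_itv; apply: gridset_cell.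
- exact: segment_connected.
- by rewrite /= in_itv.
Qed.

Lemma connected_component_start_grid i : (i <= N)%N -> pt i ->
  exists2 s, (s <= i)%N && comp_start pt cl s &
    connected_component A (grid s) (grid i).
Proof.
elim: i => [|i IH] iN pi.
  by exists 0%N; rewrite /comp_start ?pi //; apply/connected_component_refl/gridset_grid.
have [ci|nci] := boolP (cl i); last first.
  exists i.+1; first by rewrite leqnn /comp_start pi /= nci.
  exact/connected_component_refl/gridset_grid.
have /andP[pi' _] := ptcl_closed iN ci.
have [s /andP[si ss] cs] := IH (ltnW iN) pi'.
exists s; first by rewrite ss (leq_trans si).
apply: connected_component_trans cs _.
by apply: connected_component_cell; rewrite // lexx ltW ?grid_ltS.
Qed.

Lemma connected_component_start x : A x ->
  exists2 s, (s <= N)%N && comp_start pt cl s & connected_component A (grid s) x.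
Proof.
case=> [[i [iN pi ->]]|[i [iN ci /andP[ix xi]]]].
  have [s /andP[si ss] cs] := connected_component_start_grid iN pi.
  by exists s; rewrite // ss (leq_trans si iN).
have /andP[pi _] := ptcl_closed iN ci.
have [s /andP[si ss] cs] := connected_component_start_grid (ltnW iN) pi.
exists s; first by rewrite ss (leq_trans si (ltnW iN)).
apply: connected_component_trans cs _.
by apply: connected_component_cell; rewrite // (ltW ix) (ltW xi).
Qed.

Lemma starts_disconnected s s' : (s < s' <= N)%N -> pt s -> comp_start pt cl s' ->
  ~ connected_component A (grid s) (grid s').
Proof.
(* The open cell left of s' is not in A, so its midpoint separates s from s'. *)
move=> /andP[ss' s'N] ps /andP[ps' ncl] C.
have s'_gt0 : (0 < s')%N by apply: leq_ltn_trans ss'.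
pose z := (grid s'.-1 + grid s') / 2.
have lt_s' : grid s'.-1 < grid s' by rewrite ltr_grid prednK.
have zl : grid s'.-1 < z by rewrite /z; lra.
have zr : z < grid s' by rewrite /z; lra.
have zs : grid s'.-1 < z < grid s'.-1.+1 by rewrite prednK // zl zr.
have /connected_intervalP Cint := @component_connected _ A (grid s).
have /connected_component_sub : connected_component A (grid s) z.
  apply: (Cint (grid s) (grid s')) => //.
    exact/connected_component_refl/(gridset_grid _ (leq_trans (ltnW ss') s'N) ps).
  rewrite (ltW zr) andbT (le_trans _ (ltW zl)) // ler_grid.
  by rewrite -ltnS prednK.
case=> [[j [jN pj ez]]|[j [jN cj jz]]].
  by move: (grid_notin_cell j s'.-1); rewrite -ez zs.
move: ncl; rewrite s'_gt0 /=.
by rewrite -(grid_cell_uniq jz zs) cj.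
Qed.

Lemma V0_gridset : V0 A = nstarts pt cl.
Proof.
pose S := [set s | (s < N.+1)%N && comp_start pt cl s].
rewrite /V0; have -> : components A = (fun s => connected_component A (grid s)) @` S.
  apply/seteqP; split => C.
    case=> x Ax <-; have [s sS cs] := connected_component_start Ax.
    by exists s => //; apply: same_connected_component.
  case=> s /andP[sN /andP[ps _]] <-; exists (grid s) => //.
  exact: gridset_grid.
rewrite card_fset_set_image ?card_fset_set_ltn //.
  by apply: sub_finite_set (finite_II N.+1) => i /andP[].
have sep i j : i \in S -> j \in S -> (i < j)%N ->
    connected_component A (grid i) <> connected_component A (grid j).
  rewrite !inE => /andP[_ /andP[pi _]] /andP[jN sj] ij eij.
  apply: (starts_disconnected _ pi sj); first by rewrite ij -ltnS.
  by rewrite eij; apply/connected_component_refl/gridset_grid => //; case/andP: sj.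
move=> s s' sS s'S e; have [ss'|s's|//] := ltngtP s s'.
- by case: (sep _ _ sS s'S ss' e).
- by case: (sep _ _ s'S sS s's (esym e)).
Qed.

End ClosedGridSet.
End GridSets.

Section Counting.
Variables (R : realType) (N : nat).
Hypothesis N_gt0 : (0 < N)%N.

Lemma sum_cells_shift (f : nat -> bool) :
  \sum_(i < N.+1) (((i < N)%N && f i)%:R : R) =
  \sum_(i < N.+1) (((0 < i)%N && f i.-1)%:R : R).
Proof.
rewrite big_ord_recr big_ord_recl /= ltnn addr0 add0r.
by apply: eq_bigr => i _ /=; rewrite ltn_ord.
Qed.

Lemma sum_first (f : nat -> bool) :
  \sum_(i < N.+1) ((~~ (0 < i)%N && f i)%:R : R) = (f 0%N)%:R.
Proof. by rewrite big_ord_recl big1 ?addr0. Qed.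

Lemma sum_last (f : nat -> bool) :
  \sum_(i < N.+1) ((~~ (i < N)%N && f i.-1)%:R : R) = (f N.-1)%:R.
Proof. by rewrite big_ord_recr /= ltnn big1 ?add0r // => i _; rewrite ltn_ord. Qed.

Lemma ord_gt0_or_ltN (i : 'I_N.+1) : (0 < i)%N || (i < N)%N.
Proof. by case: i => [[|i]] //= _; rewrite N_gt0. Qed.

Lemma nstarts_endsC (a : nat -> bool) :
  (nstarts N (ends N (fun j => ~~ a j)) (fun j => ~~ a j))%:R =
  (nstarts N (ends N a) a)%:R + (~~ a 0%N)%:R + (~~ a N.-1)%:R - 1 :> R.
Proof.
(* The last two summands telescope, the others sum to the boundary terms. *)
have pointwise (i : 'I_N.+1) :
  (comp_start (ends N (fun j => ~~ a j)) (fun j => ~~ a j) i)%:R =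
  (comp_start (ends N a) a i)%:R + (~~ (0 < i)%N && ~~ a i)%:R
  + (~~ (i < N)%N && ~~ a i.-1)%:R - (~~ (i < N)%N && true)%:R
  - ((i < N)%N && a i)%:R + ((0 < i)%N && a i.-1)%:R :> R.
  move: (ord_gt0_or_ltN i); rewrite /comp_start /ends.
  by case: (0 < i)%N; case: (i < N)%N; case: (a i.-1); case: (a i) => //= _; lra.
rewrite /nstarts !natr_sum (eq_bigr _ (fun i _ => pointwise i)) /=.
rewrite !big_split !sumrN /=.
rewrite sum_cells_shift (sum_first (fun j => ~~ a j)) (sum_last (fun j => ~~ a j)).
rewrite (sum_last (fun=> true)) /=; lra.
Qed.

Lemma nstarts_endsCI (a c : nat -> bool) :
  (nstarts N (fun i => ends N (fun j => ~~ a j) i && ends N (fun j => ~~ c j) i)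
         (fun j => ~~ a j && ~~ c j))%:R =
  (nstarts N (ends N a) a)%:R + (nstarts N (ends N c) c)%:R
  - (nstarts N (fun i => ends N a i && ends N c i) (fun j => a j && c j))%:R
  + (nlone N (fun i => ends N a i && ends N c i) (fun j => a j && c j))%:R
  + (~~ a 0%N && ~~ c 0%N)%:R + (~~ a N.-1 && ~~ c N.-1)%:R - 1 :> R.
Proof.
have pointwise (i : 'I_N.+1) :
  (comp_start (fun i => ends N (fun j => ~~ a j) i && ends N (fun j => ~~ c j) i)
              (fun j => ~~ a j && ~~ c j) i)%:R =
  (comp_start (ends N a) a i)%:R + (comp_start (ends N c) c i)%:R
  - (comp_start (fun i => ends N a i && ends N c i) (fun j => a j && c j) i)%:R
  + (lone_point N (fun i => ends N a i && ends N c i) (fun j => a j && c j) i)%:R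
  + (~~ (0 < i)%N && (~~ a i && ~~ c i))%:R
  + (~~ (i < N)%N && (~~ a i.-1 && ~~ c i.-1))%:R - (~~ (i < N)%N && true)%:R
  - ((i < N)%N && (a i || c i))%:R + ((0 < i)%N && (a i.-1 || c i.-1))%:R :> R.
  move: (ord_gt0_or_ltN i); rewrite /lone_point /comp_start /ends.
  by case: (0 < i)%N; case: (i < N)%N; case: (a i.-1); case: (a i);
    case: (c i.-1); case: (c i) => //= _; lra.
rewrite /nstarts /nlone !natr_sum (eq_bigr _ (fun i _ => pointwise i)) /=.
rewrite !big_split !sumrN /=.
rewrite (sum_cells_shift (fun j => a j || c j)).
rewrite (sum_first (fun j => ~~ a j && ~~ c j)).
rewrite (sum_last (fun j => ~~ a j && ~~ c j)) (sum_last (fun=> true)) /=; lra.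
Qed.
End Counting.

Lemma natr_forall (R : comNzRingType) (T : finType) (P : pred T) :
  ([forall x, P x]%:R : R) = \prod_x (P x)%:R.
Proof.
have [allP|] := boolP [forall x, P x].
  by rewrite big1 // => x _; move/forallP: allP => ->.
by rewrite negb_forall => /existsP[x Px]; rewrite (bigD1 x) //= (negbTE Px) mul0r.
Qed.

Section Expectation.
Variables (R : realType) (n M : nat) (p : R).
Local Notation config := (config n M).

Lemma Exp_prod (f : cell n M -> bool -> R) :
  Exp p (fun b : config => \prod_x f x (b x)) =
  \prod_x (p * f x true + (1 - p) * f x false).
Proof.
rewrite /Exp /prob (eq_bigr (fun b : config =>
  \prod_x ((if b x then p else 1 - p) * f x (b x)))) => [|b _]; last by rewrite big_split.
rewrite -(bigA_distr_bigA (fun x v => (if v then p else 1 - p) * f x v)) /=.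
by apply: eq_bigr => x _; rewrite big_bool addrC.
Qed.

Lemma sum_prob : \sum_(b : config) prob p b = 1.
Proof.
transitivity (Exp p (fun b : config => \prod_(x : cell n M) (1 : R))).
  by apply: eq_bigr => b _; rewrite big1 ?mulr1.
by rewrite (Exp_prod (fun _ _ => 1)) big1 // => x _; rewrite !mulr1 addrC subrK.
Qed.

Lemma ExpC (c : R) : Exp p (fun _ : config => c) = c.
Proof. by rewrite /Exp -big_distrl /= sum_prob mul1r. Qed.

Lemma eq_Exp (X Y : config -> R) : X =1 Y -> Exp p X = Exp p Y.
Proof. by move=> XY; apply: eq_bigr => b _; rewrite XY. Qed.

Lemma eq_Exp2 (X Y : config -> config -> R) :
  (forall b1 b2, X b1 b2 = Y b1 b2) -> Exp2 p X = Exp2 p Y.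
Proof. by move=> XY; apply: eq_bigr => b1 _; apply: eq_bigr => b2 _; rewrite XY. Qed.

Lemma ExpD (X Y : config -> R) :
  Exp p (fun b => X b + Y b) = Exp p X + Exp p Y.
Proof. by rewrite /Exp -big_split; apply: eq_bigr => b _; rewrite mulrDr. Qed.

Lemma ExpN (X : config -> R) : Exp p (fun b => - X b) = - Exp p X.
Proof. by rewrite /Exp -sumrN; apply: eq_bigr => b _; rewrite mulrN. Qed.

Lemma Exp2M (X Y : config -> R) :
  Exp2 p (fun b1 b2 => X b1 * Y b2) = Exp p X * Exp p Y.
Proof.
rewrite /Exp2 /Exp big_distrl /=; apply: eq_bigr => b1 _.
by rewrite big_distrr /=; apply: eq_bigr => b2 _; rewrite mulrACA.
Qed.

Lemma Exp2l (X : config -> R) : Exp2 p (fun b1 _ => X b1) = Exp p X.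
Proof.
rewrite -[RHS]mulr1 -(ExpC 1) -Exp2M.
by congr Exp2; apply/funext => b1; apply/funext => b2; rewrite mulr1.
Qed.

Lemma Exp2r (X : config -> R) : Exp2 p (fun _ b2 => X b2) = Exp p X.
Proof.
rewrite -[RHS]mul1r -(ExpC 1) -Exp2M.
by congr Exp2; apply/funext => b1; apply/funext => b2; rewrite mul1r.
Qed.

Lemma Exp2D (X Y : config -> config -> R) :
  Exp2 p (fun b1 b2 => X b1 b2 + Y b1 b2) = Exp2 p X + Exp2 p Y.
Proof.
rewrite /Exp2 -big_split; apply: eq_bigr => b1 _.
by rewrite -big_split; apply: eq_bigr => b2 _; rewrite mulrDr.
Qed.

Lemma Exp2N (X : config -> config -> R) :
  Exp2 p (fun b1 b2 => - X b1 b2) = - Exp2 p X.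
Proof.
rewrite /Exp2 -sumrN; apply: eq_bigr => b1 _.
by rewrite -sumrN; apply: eq_bigr => b2 _; rewrite mulrN.
Qed.

End Expectation.

Section Percolation.
Variables (R : realType) (M n : nat).
Hypothesis M_gt0 : (0 < M)%N.
Local Notation config := (config n M).
Local Notation N := (M ^ n)%N.
Local Notation K := (@Kn R n M).
Local Notation D := (@Dn R n M).

Let N_gt0 : (0 < N)%N. Proof. by rewrite expn_gt0 M_gt0. Qed.
#[local] Hint Resolve N_gt0 : core.

Lemma card_ancestors j : (j < N)%N ->
  #|[pred x : cell n M | (val (tagged x) == j %/ M ^ (n - (tag x).+1))%N]| = n.
Proof.
move=> jN.
have anc_lt (k : 'I_n) : (j %/ M ^ (n - k.+1) < M ^ k.+1)%N.
  by rewrite ltn_divLR ?expn_gt0 ?M_gt0 // -expnD subnKC.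
pose anc k : cell n M := Tagged (fun k : 'I_n => 'I_(M ^ k.+1)) (Ordinal (anc_lt k)).
have anc_inj : injective anc by move=> k1 k2 /(congr1 tag).
rewrite -[RHS](card_ord n) -(card_imset _ anc_inj).
apply: eq_card => x; rewrite inE /=; apply/idP/imsetP => [|[k _ ->] //].
by case: x => k y /= /eqP yE; exists k => //; congr Tagged; apply: val_inj.
Qed.

Lemma Exp_kept (p : R) j : (j < N)%N ->
  Exp p (fun b : config => (kept b j)%:R) = p ^+ n.
Proof.
move=> jN; rewrite -[in RHS](card_ancestors jN).
set anc := fun x : cell n M => _.
transitivity (Exp p (fun b : config => \prod_x (anc x ==> b x)%:R)).
  by apply: eq_Exp => b; rewrite /kept natr_forall.
rewrite (Exp_prod p (fun x v => (anc x ==> v)%:R)) -prodr_const.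
rewrite [RHS]big_mkcond; apply: eq_bigr => x _; rewrite inE.
by case: (anc x); rewrite /= ?mulr0 ?mulr1 ?addr0 // subrKC.
Qed.

Lemma Exp_not_kept (p : R) j : (j < N)%N ->
  Exp p (fun b : config => (~~ kept b j)%:R) = 1 - p ^+ n.
Proof.
move=> jN; rewrite -(Exp_kept p jN) -ExpN -[X in _ = X + _](ExpC n M p) -ExpD.
by apply: eq_Exp => b; case: (kept b j); rewrite /= ?subrr ?subr0.
Qed.

Lemma Kn_cellset (b : config) : K b = cellset N (kept b).
Proof. by []. Qed.

Lemma Kn_gridset (b : config) : K b = gridset N (ends N (kept b)) (kept b).
Proof. by rewrite Kn_cellset cellset_gridset. Qed.

Lemma Dn_gridset (b : config) :
  D b = gridset N (ends N (fun j => ~~ kept b j)) (fun j => ~~ kept b j).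
Proof. by rewrite /Dn Kn_cellset closure_cellsetC // cellset_gridset. Qed.

Lemma V1_Dn (b : config) : V1 (D b) = 1 - V1 (K b).
Proof.
rewrite Dn_gridset Kn_gridset !V1_gridset // -[X in X - _](sum_invN R N_gt0) -sumrB.
by apply: eq_bigr => i _; case: (kept b i); rewrite /= ?mul1r ?mul0r ?subrr ?subr0.
Qed.

Lemma V1_DnI (b1 b2 : config) :
  V1 (D b1 `&` D b2) = 1 - V1 (K b1) - V1 (K b2) + V1 (K b1 `&` K b2).
Proof.
rewrite !Dn_gridset !Kn_gridset !gridsetI // !V1_gridset //.
rewrite -[X in X - _ - _ + _](sum_invN R N_gt0) -!sumrB -big_split /=.
by apply: eq_bigr => i _; case: (kept b1 i); case: (kept b2 i); rewrite /= ?mul0r ?mul1r; lra.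
Qed.

Lemma V0_Dn (b : config) :
  (V0 (D b))%:R = (V0 (K b))%:R + (~~ kept b 0%N)%:R + (~~ kept b N.-1)%:R - 1 :> R.
Proof.
by rewrite Dn_gridset Kn_gridset !V0_gridset ?nstarts_endsC //; exact: grid_closed_ends.
Qed.

Lemma V0_DnI (b1 b2 : config) :
  (V0 (D b1 `&` D b2))%:R =
  (V0 (K b1))%:R + (V0 (K b2))%:R - (V0 (K b1 `&` K b2))%:R + (Niso (K b1 `&` K b2))%:R
  + (~~ kept b1 0%N)%:R * (~~ kept b2 0%N)%:R
  + (~~ kept b1 N.-1)%:R * (~~ kept b2 N.-1)%:R - 1 :> R.
Proof.
have closedI a c : grid_closed N (fun i => ends N a i && ends N c i) (fun j => a j && c j).
  by apply: grid_closedI; exact: grid_closed_ends.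
rewrite !Dn_gridset !Kn_gridset !gridsetI // !V0_gridset ?Niso_gridset //;
  try exact: grid_closed_ends.
by rewrite -!natrM !mulnb nstarts_endsCI.
Qed.
End Percolation.

Theorem corollary5p6 (R : realType) (M n : nat) (p : R) :
  (2 <= M)%N -> 0 < p <= 1 ->
  [/\ Exp2 p (fun b1 b2 : config n M => V1 (Dn b1 `&` Dn b2))
        = 1 - 2 * Exp p (fun b : config n M => V1 (Kn b))
          + Exp2 p (fun b1 b2 : config n M => V1 (Kn b1 `&` Kn b2)),
      Exp2 p (fun b1 b2 : config n M => (V0 (R:=R) (Dn b1 `&` Dn b2))%:R)
        = 2 * Exp p (fun b : config n M => (V0 (R:=R) (Kn b))%:R)
          - Exp2 p (fun b1 b2 : config n M => (V0 (R:=R) (Kn b1 `&` Kn b2))%:R)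
          + Exp2 p (fun b1 b2 : config n M => (Niso (R:=R) (Kn b1 `&` Kn b2))%:R)
          + 1 - 4 * p ^+ n + 2 * p ^+ (2 * n),
      Exp p (fun b : config n M => V1 (Dn b))
        = 1 - Exp p (fun b : config n M => V1 (Kn b))
    & Exp p (fun b : config n M => (V0 (R:=R) (Dn b))%:R)
        = Exp p (fun b : config n M => (V0 (R:=R) (Kn b))%:R) + 1 - 2 * p ^+ n].
Proof.
move=> M_ge2 _; have M_gt0 : (0 < M)%N by apply: leq_trans M_ge2.
have first_lt : (0 < M ^ n)%N by rewrite expn_gt0 M_gt0.
have last_lt : ((M ^ n).-1 < M ^ n)%N by rewrite prednK.
split.
- rewrite (eq_Exp2 p (@V1_DnI R M n M_gt0)) !Exp2D !Exp2N !Exp2l !Exp2r ExpC; ring.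
- rewrite (eq_Exp2 p (@V0_DnI R M n M_gt0)) !Exp2D !Exp2N !Exp2M !Exp2l !Exp2r ExpC.
  rewrite !Exp_not_kept // mulnC exprM; ring.
- by rewrite (eq_Exp p (@V1_Dn R M n M_gt0)) ExpD ExpN ExpC.
- rewrite (eq_Exp p (@V0_Dn R M n M_gt0)) !ExpD ExpN ExpC !Exp_not_kept //; ring.
Qed.
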